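(* Let $\mathcal{C}_1,\dots,\mathcal{C}_D\subsetneq\mathbb{F}_q^n$ be linear codes and $\rho:=\rho(\mathcal{C}_1,\dots,\mathcal{C}_D)$. Then every $\rho$-closed subset $M\subseteq[n]^D$ is inner-generated for the code $\mathcal{C}_1\boxplus\cdots\boxplus\mathcal{C}_D$.
   Context: $\mathbb{F}_q$ is a finite field of characteristic 2; $|v|$ is Hamming weight, $\|v\|=|v|/|S|$ for $v\in\mathbb{F}_q^S$. $\mathcal{L}_i$ is the set of lines in $[n]^D$ parallel to the $i$-th axis (sets $A_1\times\cdots\times A_D$ with $A_i=[n]$, $|A_j|=1$ for $j\ne i$), $\mathcal{L}=\bigcup_i\mathcal{L}_i$; a line in $\mathcal{L}_i$ is identified with $[n]$ via the $i$-th coordinate. $\mathcal{C}^{(i)}=\{c\in\mathbb{F}_q^{[n]^D}:c|_\ell\in\mathcal{C}_i\ \forall\ell\in\mathcal{L}_i\}$, $\mathcal{C}_1\boxplus\cdots\boxplus\mathcal{C}_D=\sum_i\mathcal{C}^{(i)}$; $|x|_i$ is the number of $\ell\in\mathcal{L}_i$ with $x|_\ell\ne0$, $\|x\|_i=|x|_i/n^{D-1}$. The collection is $\rho$-product-expanding if every $c\in\mathcal{C}_1\boxplus\cdots\boxplus\mathcal{C}_D$ can be written $c=\sum_ia_i$, $a_i\in\mathcal{C}^{(i)}$, with $\rho\sum_i\|a_i\|_i\le\|c\|$; $\rho(\mathcal{C}_1,\dots,\mathcal{C}_D)$ is the maximal such $\rho$. For $\ell\in\mathcal{L}_i$, $\mathcal{C}_\ell=\{c:\operatorname{supp}c\subseteq\ell,\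 c|_\ell\in\mathcal{C}_i\}$; for $M\subseteq[n]^D$, $L(M)=\{\ell\in\mathcal{L}:\ell\subseteq M\}$. $M$ is inner-generated for $\mathcal{C}_1\boxplus\cdots\boxplus\mathcal{C}_D$ if every codeword $c$ of it with $\operatorname{supp}c\subseteq M$ lies in $\sum_{\ell\in L(M)}\mathcal{C}_\ell$. For $\varepsilon>0$, $M$ is $\varepsilon$-closed if for every line $\ell\in\mathcal{L}$ either $\ell\subseteq M$ or $|\ell\cap M|<\varepsilon n$. *)

From HB Require Import structures.
From mathcomp Require Import all_boot all_order all_algebra.
Set Implicit Arguments. Unset Strict Implicit. Unset Printing Implicit Defensive.
Import Order.TTheory GRing.Theory Num.Theory.
Local Open Scope ring_scope.

Section Defs.
Variables (F : finFieldType) (D n : nat).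

Definition grid := {ffun 'I_D -> 'I_n}.
Definition word := {ffun grid -> F}.

Definition setc (p : grid) (i : 'I_D) (k : 'I_n) : grid :=
  [ffun j => if j == i then k else p j].

Definition line (i : 'I_D) (p : grid) : {set grid} :=
  [set y : grid | [forall j, (j != i) ==> (y j == p j)]].

(* Restriction of a word to the line through p parallel to axis i,
   identified with [n] via the i-th coordinate. *)
Definition restr (x : word) (i : 'I_D) (p : grid) : 'rV[F]_n :=
  \row_k x (setc p i k).

Definition in_Ci (C : 'I_D -> {vspace 'rV[F]_n}) (i : 'I_D) (x : word) : Prop :=
  forall p : grid, restr x i p \in C i.

(* membership in C_1 ⊞ ... ⊞ C_D = sum_i C^(i) *)
Definition in_tensor_sum (C : 'I_D -> {vspace 'rV[F]_n}) (c : word) : Prop :=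
  exists a : 'I_D -> word, (forall i, in_Ci C i (a i)) /\ c = \sum_i a i.

Definition hw (x : word) : nat := #|[set y : grid | x y != 0]|.

Definition line_wt (x : word) (i : 'I_D) : nat :=
  #|[set line i p | p in [set p : grid | [exists y in line i p, x y != 0]]]|.

Variable R : realFieldType.

Definition nhw (x : word) : R := (hw x)%:R / (n ^ D)%:R.
Definition nline_wt (x : word) (i : 'I_D) : R := (line_wt x i)%:R / (n ^ D.-1)%:R.

Definition product_expanding (C : 'I_D -> {vspace 'rV[F]_n}) (rho : R) : Prop :=
  forall c : word, in_tensor_sum C c ->
    exists a : 'I_D -> word,
      [/\ forall i, in_Ci C i (a i), c = \sum_i a i &
          rho * (\sum_i nline_wt (a i) i) <= nhw c].

Definition is_rho (C : 'I_D -> {vspace 'rV[F]_n}) (rho : R) : Prop :=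
  product_expanding C rho /\ forall r : R, product_expanding C r -> r <= rho.

Definition in_Cline (C : 'I_D -> {vspace 'rV[F]_n}) (i : 'I_D) (p : grid) (x : word) : Prop :=
  (forall y, y \notin line i p -> x y = 0) /\ restr x i p \in C i.

Definition closed_set (eps : R) (M : {set grid}) : Prop :=
  forall (i : 'I_D) (p : grid),
    line i p \subset M \/ (#|line i p :&: M|%:R < eps * n%:R).

Definition inner_generated (C : 'I_D -> {vspace 'rV[F]_n}) (M : {set grid}) : Prop :=
  forall c : word, in_tensor_sum C c -> (forall y, c y != 0 -> y \in M) ->
    exists f : 'I_D -> grid -> word,
      (forall i p, in_Cline C i p (f i p)) /\
      (forall i p, ~~ (line i p \subset M) -> f i p = 0) /\
      c = \sum_i \sum_p f i p.

End Defs.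

From HB Require Import structures.
From mathcomp Require Import all_boot all_order all_algebra.
From mathcomp Require Import ring.
Import Order.TTheory GRing.Theory Num.Theory.
Local Open Scope ring_scope.
Set Implicit Arguments. Unset Strict Implicit. Unset Printing Implicit Defensive.

(* Write c = sum_i a_i with a_i in C^(i) as given by rho-product-expansion.  The
   part of a_i on the lines of L_i contained in M is a sum of line codewords
   inside M.  The remainder d = c - (those parts) is still in the tensor code
   and, like c, supported in M; every line of L_i carrying it leaves M, hence
   meets M in fewer than rho n points.  So |d| < rho n sum_i |a_i|_i <= |c|,
   and induction on the weight concludes. *)

Lemma card_bigcup_leq (T I : finType) (P : pred I) (B : I -> {set T}) :
  (#|\bigcup_(i | P i) B i| <= \sum_(i | P i) #|B i|)%N.
Proof.
elim/big_rec2: _ => [|i X k _ le_Xk]; first by rewrite cards0.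
by apply: leq_trans (leq_card_setU _ _) _; rewrite leq_add2l.
Qed.

Lemma card_lt_cover (R : numDomainType) (T I : finType) (S : {set T})
    (L : I -> {set {set T}}) (b : R) :
  S != set0 ->
  (forall x, x \in S -> exists i, exists2 l, l \in L i & x \in l) ->
  (forall i l, l \in L i -> #|l :&: S|%:R < b) ->
  #|S|%:R < b * (\sum_i #|L i|)%:R.
Proof.
move=> S_n0 S_cover lt_b.
pose P := [pred il : I * {set T} | il.2 \in L il.1].
have le_S : (#|S| <= \sum_(il in P) #|il.2 :&: S|)%N.
  apply: leq_trans (card_bigcup_leq _ _); apply/subset_leq_card/subsetP => x xS.
  have [i [l li xl]] := S_cover x xS.
  by apply/bigcupP; exists (i, l); [exact: li | rewrite inE xl].
have card_P : #|P| = (\sum_i #|L i|)%N.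
  under [RHS]eq_bigr do rewrite -sum1_card.
  by rewrite pair_big_dep -sum1_card.
have [x xS] := set0Pn _ S_n0; have [i [l li _]] := S_cover x xS.
apply: le_lt_trans (_ : (\sum_(il in P) #|il.2 :&: S|)%N%:R < _).
  by rewrite ler_nat.
rewrite natr_sum -card_P mulr_natr -sumr_const.
apply: ltr_sum => [|[j k]]; last exact: lt_b.
by apply/hasP; exists (i, l); rewrite ?mem_index_enum.
Qed.

Section Lines.
Variables D n : nat.
Implicit Types (i : 'I_D) (p y : grid D n).

Lemma mem_line i p : p \in line i p.
Proof. by rewrite inE; apply/forallP => j; apply/implyP. Qed.

Lemma line_of_mem i p y : y \in line i p -> line i y = line i p.
Proof.
rewrite inE => /forallP y_p; apply/setP => z; rewrite !inE.
by apply/forallP/forallP => z_q j; apply/implyP => ji;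
  rewrite (eqP (implyP (z_q j) ji)) (eqP (implyP (y_p j) ji)).
Qed.

Lemma setc_mem_line i p k : setc p i k \in line i p.
Proof.
by rewrite inE; apply/forallP => j; apply/implyP => ji; rewrite ffunE (negbTE ji).
Qed.

Lemma mem_lineE i p y : y \in line i p -> y = setc p i (y i).
Proof.
rewrite inE => /forallP y_p; apply/ffunP => j; rewrite ffunE.
by case: eqP => [->|/eqP ji] //; rewrite (eqP (implyP (y_p j) ji)).
Qed.

End Lines.

Section LinePart.
Variables (F : finFieldType) (D n : nat).
Implicit Types (i : 'I_D) (p y : grid D n) (x : word F D n).

Lemma restr0 i p : restr (0 : word F D n) i p = 0.
Proof. by apply/rowP => k; rewrite !mxE ffunE. Qed.

Lemma restrD x1 x2 i p : restr (x1 + x2) i p = restr x1 i p + restr x2 i p.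
Proof. by apply/rowP => k; rewrite !mxE ffunE. Qed.

Definition line_part x i p : word F D n :=
  [ffun y => if y \in line i p then x y else 0].

Lemma restr_line_part x i p : restr (line_part x i p) i p = restr x i p.
Proof. by apply/rowP => k; rewrite !mxE ffunE setc_mem_line. Qed.

Lemma line_part_Cline (C : 'I_D -> {vspace 'rV[F]_n}) x i p :
  in_Ci C i x -> in_Cline C i p (line_part x i p).
Proof.
move=> Cx; split; first by move=> y /negbTE y_p; rewrite ffunE y_p.
by rewrite restr_line_part.
Qed.

(* Each line of L_i is indexed once, by its point with i-th coordinate 0. *)
Lemma sum_line_part x i :
  x = \sum_(p : grid D n | nat_of_ord (p i) == 0%N) line_part x i p.
Proof.
apply/ffunP => y; rewrite sum_ffunE.
have n_gt0 : (0 < n)%N by apply: leq_ltn_trans (ltn_ord (y i)).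
pose y0 := setc y i (Ordinal n_gt0).
have y0_i : nat_of_ord (y0 i) == 0%N by rewrite ffunE eqxx.
rewrite (bigD1 y0) //= big1 => [|p /andP [p_i p_y0]]; rewrite ffunE.
  by rewrite (line_of_mem (setc_mem_line i y _)) mem_line addr0.
case: ifP => // y_p; case/eqP: p_y0.
rewrite [p](mem_lineE (_ : p \in line i y)).
  by congr setc; apply: val_inj; rewrite /= (eqP p_i).
by rewrite (line_of_mem y_p) mem_line.
Qed.

End LinePart.

Section InnerSpan.
Variables (F : finFieldType) (D n : nat) (C : 'I_D -> {vspace 'rV[F]_n}).
Variable M : {set grid D n}.
Implicit Types (i : 'I_D) (p y : grid D n) (x : word F D n).

Definition in_inner_span x :=
  exists f : 'I_D -> grid D n -> word F D n,
    (forall i p, in_Cline C i p (f i p)) /\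
    (forall i p, ~~ (line i p \subset M) -> f i p = 0) /\
    x = \sum_i \sum_p f i p.

Lemma inner_span0 : in_inner_span 0.
Proof.
exists (fun _ _ => 0); split=> [i p|]; last by split=> //; rewrite big1 // => i _; rewrite big1.
by split=> [y _|]; rewrite ?ffunE // restr0 mem0v.
Qed.

Lemma inner_spanD x1 x2 :
  in_inner_span x1 -> in_inner_span x2 -> in_inner_span (x1 + x2).
Proof.
move=> [f1 [Cf1 [f1_out ->]]] [f2 [Cf2 [f2_out ->]]].
exists (fun i p => f1 i p + f2 i p); split=> [i p|]; [|split=> [i p p_out|]].
- have [f1_l Cf1_l] := Cf1 i p; have [f2_l Cf2_l] := Cf2 i p.
  split=> [y y_p|]; first by rewrite ffunE f1_l // f2_l // addr0.
  by rewrite restrD memvD.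
- by rewrite f1_out // f2_out // addr0.
- by rewrite -big_split; apply: eq_bigr => i _; rewrite -big_split.
Qed.

Lemma inner_span_sum (I : finType) (G : I -> word F D n) :
  (forall j, in_inner_span (G j)) -> in_inner_span (\sum_j G j).
Proof. by move=> G_in; elim/big_ind: _ => //; [apply: inner_span0 | apply: inner_spanD]. Qed.

Definition inner_part x i : word F D n :=
  [ffun y => if line i y \subset M then x y else 0].

Definition outer_part x i : word F D n :=
  [ffun y => if line i y \subset M then 0 else x y].

Lemma inner_outer_part x i : x = inner_part x i + outer_part x i.
Proof. by apply/ffunP => y; rewrite !ffunE; case: ifP; rewrite ?addr0 ?add0r. Qed.

Lemma line_part_inner x i p :
  line_part (inner_part x i) i p = if line i p \subset M then line_part x i p else 0.
Proof.
apply/ffunP => y; rewrite !ffunE; case: ifP => y_p; last by case: ifP; rewrite ?ffunE ?y_p.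
by rewrite (line_of_mem y_p); case: ifP; rewrite ?ffunE ?y_p.
Qed.

Lemma inner_span_inner_part x i : in_Ci C i x -> in_inner_span (inner_part x i).
Proof.
move=> Cx.
pose f j p := if [&& j == i, nat_of_ord (p j) == 0%N & line j p \subset M]
              then line_part x j p else 0.
exists f; split; [|split]; rewrite /f.
- move=> j p; case: ifP => [/and3P [/eqP -> _ _]|_]; first exact: line_part_Cline.
  by split=> [y _|]; rewrite ?ffunE // restr0 mem0v.
- by move=> j p /negbTE p_out; rewrite p_out !andbF.
rewrite (bigD1 i) //= [X in _ + X]big1 => [|j /negbTE ji]; last first.
  by rewrite big1 // => p _; rewrite ji.
rewrite addr0 {1}(sum_line_part (inner_part x i) i) big_mkcond /=.
by apply: eq_bigr => p _; rewrite eqxx line_part_inner; case: ifP.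
Qed.

Lemma outer_part_neq0 x i y :
  outer_part x i y != 0 -> ~~ (line i y \subset M) /\ x y != 0.
Proof. by rewrite ffunE; case: ifP; rewrite ?eqxx. Qed.

Lemma outer_part_Ci x i : in_Ci C i x -> in_Ci C i (outer_part x i).
Proof.
move=> Cx p; have -> : restr (outer_part x i) i p =
    if line i p \subset M then 0 else restr x i p.
  by case: ifP => p_in; apply/rowP => k;
    rewrite !mxE !ffunE (line_of_mem (setc_mem_line _ _ _)) p_in.
by case: ifP => _; [apply: mem0v | apply: Cx].
Qed.

End InnerSpan.

Lemma sum_ffun_neq0 (aT I : finType) (V : nmodType) (G : I -> {ffun aT -> V}) y :
  (\sum_i G i) y != 0 -> exists i, G i y != 0.
Proof.
rewrite sum_ffunE => /eqP sum_n0; apply/existsP/existsPn => G0; apply: sum_n0.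
by apply: big1 => i _; apply/eqP; rewrite -[_ == 0]negbK G0.
Qed.

Lemma ffun_neq0 (aT : finType) (V : nmodType) (x : {ffun aT -> V}) :
  x != 0 -> exists y, x y != 0.
Proof.
move=> /eqP x_n0; apply/existsP/existsPn => x0; apply/x_n0/ffunP => y.
by rewrite ffunE; apply/eqP; rewrite -[_ == 0]negbK x0.
Qed.

Section Expansion.
Variables (F : finFieldType) (D n : nat) (C : 'I_D -> {vspace 'rV[F]_n}).
Variables (R : realFieldType) (rho : R) (M : {set grid D n}).
Implicit Types (c d x : word F D n) (a : 'I_D -> word F D n).

Definition supported_in x := forall y, x y != 0 -> y \in M.

Lemma expansion_weight_bound a c : (0 < n)%N -> (0 < D)%N ->
  rho * (\sum_i nline_wt R (a i) i) <= nhw R c ->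
  rho * n%:R * (\sum_i line_wt (a i) i)%:R <= (hw c)%:R.
Proof.
move=> n_gt0 D_gt0; rewrite /nhw /nline_wt -mulr_suml -natr_sum.
rewrite (_ : n ^ D = n * n ^ D.-1)%N ?natrM; last by rewrite -expnS prednK.
have n_pos : 0 < (n%:R : R) by rewrite ltr0n.
have nD_pos : 0 < ((n ^ D.-1)%:R : R) by rewrite ltr0n expn_gt0 n_gt0.
set S := (\sum_i _)%:R; set w := (hw c)%:R => le_rho.
have -> : rho * n%:R * S = rho * (S / (n ^ D.-1)%:R) * (n%:R * (n ^ D.-1)%:R).
  by field; rewrite gt_eqF.
have -> : w = w / (n%:R * (n ^ D.-1)%:R) * (n%:R * (n ^ D.-1)%:R).
  by field; rewrite !gt_eqF.
by rewrite ler_pM2r ?mulr_gt0.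
Qed.

Hypothesis M_closed : closed_set rho M.

Lemma weight_outer_sum_lt a (d := \sum_i outer_part M (a i) i) :
  d != 0 -> supported_in d ->
  (hw d)%:R < rho * n%:R * (\sum_i line_wt (a i) i)%:R.
Proof.
move=> d_n0 d_in.
pose L i := [set line i p | p in
  [set p : grid D n | [exists y in line i p, outer_part M (a i) i y != 0]]].
have L_out i l : l \in L i -> exists2 p, l = line i p & ~~ (line i p \subset M).
  case/imsetP=> p; rewrite inE => /existsP [y /andP [y_p /outer_part_neq0 [y_out _]]] ->.
  by exists p; rewrite -?(line_of_mem y_p).
have lt_L i l : l \in L i -> #|l :&: [set y | d y != 0]|%:R < rho * n%:R.
  case/L_out=> p -> p_out; have [p_in|lt_p] := M_closed i p.
    by rewrite p_in in p_out.
  apply: le_lt_trans lt_p; rewrite ler_nat subset_leq_card ?setIS //.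
  by apply/subsetP => y; rewrite inE; apply: d_in.
have L_cover y : y \in [set y | d y != 0] -> exists i, exists2 l, l \in L i & y \in l.
  rewrite inE => /sum_ffun_neq0 [i y_i]; exists i, (line i y); last exact: mem_line.
  by apply/imsetP; exists y; rewrite // inE; apply/existsP; exists y; rewrite mem_line.
have [y0 d_y0] := ffun_neq0 d_n0.
have y0_S : y0 \in [set y | d y != 0] by rewrite inE.
have [i0 [l0 l0_L _]] := L_cover y0 y0_S.
have rho_n_pos : 0 <= rho * n%:R by apply/ltW/(le_lt_trans _ (lt_L _ _ l0_L)).
have -> : hw d = #|[set y | d y != 0]| by [].
apply: lt_le_trans (card_lt_cover _ L_cover lt_L) _; first by apply/set0Pn; exists y0.
rewrite ler_wpM2l // ler_nat; apply: leq_sum => i _.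
apply/subset_leq_card/imsetS/subsetP => p; rewrite !inE => /existsP [y /andP [y_p y_i]].
by apply/existsP; exists y; rewrite y_p; case: (outer_part_neq0 y_i).
Qed.

Hypothesis C_expanding : product_expanding C rho.

Lemma inner_split_lighter c : in_tensor_sum C c -> supported_in c ->
  exists g d, [/\ in_inner_span C M g, c = g + d, in_tensor_sum C d,
                  supported_in d & d = 0 \/ (hw d < hw c)%N].
Proof.
move=> Cc c_in; have [a [Ca c_a le_rho]] := C_expanding Cc.
pose g := \sum_i inner_part M (a i) i; pose d := \sum_i outer_part M (a i) i.
have c_gd : c = g + d.
  by rewrite c_a -big_split; apply: eq_bigr => i _; apply: inner_outer_part.
have g_out y : y \notin M -> g y = 0.
  move=> y_out; rewrite sum_ffunE big1 // => i _; rewrite ffunE.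
  by case: ifP => // /subsetP/(_ y (mem_line _ _)); rewrite (negbTE y_out).
have d_in : supported_in d.
  move=> y; apply: contraR => y_out.
  by move/eqP: (contraR (c_in y) y_out); rewrite c_gd ffunE g_out // add0r => ->.
exists g, d; split=> //.
- by apply: inner_span_sum => i; apply: inner_span_inner_part.
- by exists (fun i => outer_part M (a i) i); split=> // i; apply: outer_part_Ci.
have [->|d_n0] := eqVneq d 0; [by left | right].
have [y0 d_y0] := ffun_neq0 d_n0; have [i0 _] := sum_ffun_neq0 d_y0.
have n_gt0 : (0 < n)%N by apply: leq_ltn_trans (ltn_ord (y0 i0)).
have D_gt0 : (0 < D)%N by apply: leq_ltn_trans (ltn_ord i0).
rewrite -(ltr_nat R); apply: lt_le_trans (weight_outer_sum_lt d_n0 d_in) _.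
exact: expansion_weight_bound.
Qed.

Lemma tensor_sum_inner_span c :
  in_tensor_sum C c -> supported_in c -> in_inner_span C M c.
Proof.
elim/ltn_ind: {c}(hw c) {-2}c (erefl (hw c)) => k IH c c_k Cc c_in.
have [g [d [g_in c_gd Cd d_in [d0|lt_d]]]] := inner_split_lighter Cc c_in.
  by rewrite c_gd d0 addr0.
by rewrite c_gd; apply: inner_spanD => //; apply: (IH (hw d)); rewrite -?c_k.
Qed.

End Expansion.

Theorem lemma7 (F : finFieldType) (hF : 2%N \in [pchar F]) (D n : nat)
  (C : 'I_D -> {vspace 'rV[F]_n}) (hC : forall i, C i != fullv)
  (R : realFieldType) (rho : R) (hrho : is_rho C rho)
  (M : {set grid D n}) (hM : closed_set rho M) :
  inner_generated C M.
Proof.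
move=> c Cc c_in; exact: (tensor_sum_inner_span hM hrho.1 Cc c_in).
Qed.
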